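(* There is an absolute constant $K$ such that the following holds. Let $0\le\xi\le1/2$ and let $\rho\in\mathbb{R}^{n\times n}$ be psd with $\operatorname{tr}(\rho)=1$, $\rho_{ii}>0$ for all $i$, and $\sum_i|\rho_{ii}-1/n|\le\xi^3$. Let $\sigma\in\mathbb{R}^{n\times n}$ have entries $\sigma_{ij}=\frac{\rho_{ij}}{n\sqrt{\rho_{ii}\rho_{jj}}}$. Then $\|\rho-\sigma\|_{\mathrm{tr}}\le K\xi$.
   Context: $\|A\|_{\mathrm{tr}}$ is the trace norm. The paper writes the conclusion as $\|\rho-\sigma\|_{\mathrm{tr}}=\mathcal{O}(\xi)$, with the implied constant independent of $n$ and $\rho$. *)

From mathcomp Require Import all_boot all_order all_algebra.
From mathcomp Require Import all_classical all_reals.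
Set Implicit Arguments. Unset Strict Implicit. Unset Printing Implicit Defensive.
Import Order.TTheory GRing.Theory Num.Theory.
Local Open Scope ring_scope.

Definition psd (R : realType) (n : nat) (A : 'M[R]_n) : Prop :=
  A^T = A /\ forall x : 'cV[R]_n, 0 <= (x^T *m A *m x) 0 0.

(* B is the psd square root |A| = sqrt(A^T A). Then the trace norm
   ||A||_tr = \tr |A| (sum of singular values). *)
Definition is_abs_mx (R : realType) (n : nat) (A B : 'M[R]_n) : Prop :=
  psd B /\ B *m B = A^T *m A.

Definition sigma_of (R : realType) (n : nat) (rho : 'M[R]_n) : 'M[R]_n :=
  \matrix_(i, j) (rho i j / (n%:R * Num.sqrt (rho i i * rho j j))).

(* Factor rho = W W^T and let C = diag (1 / sqrt (n rho_ii)), so that sigma = C rho C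
   and rho - sigma = F W^T + (C W) F^T with F = (1 - C) W.  For the Frobenius
   inner product <P, Q> = tr (P^T Q) we have |W|^2 = |C W|^2 = 1, while
   |F|^2 = sum_i (sqrt rho_ii - 1 / sqrt n)^2 <= sum_i |rho_ii - 1/n| <= xi^3.
   The trace norm of A is bounded by sup tr (M A^T) over contractions M, because
   M = A (|A| + e)^-1 is a contraction with tr |A| <= tr (M A^T) + n e; and
   tr (P^T M Q) <= |P| |Q| for a contraction M.  Hence the trace norm of
   rho - sigma is at most 2 xi^(3/2) <= 2 xi. *)

From mathcomp Require Import all_boot all_order all_algebra.
From mathcomp Require Import all_classical all_reals.
From mathcomp Require Import ring lra.
Set Implicit Arguments. Unset Strict Implicit. Unset Printing Implicit Defensive.
Import Order.TTheory GRing.Theory Num.Theory.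
Local Open Scope ring_scope.

Lemma sqr_le_mul_of_quadratic_ge0 (R : realFieldType) (a b c : R) :
  0 <= c -> (forall t, 0 <= a + 2 * t * b + t ^+ 2 * c) -> b ^+ 2 <= a * c.
Proof.
rewrite le_eqVlt => /orP[/eqP c0 | c_gt0] q_ge0.
  have b0 : b = 0.
    apply/eqP/negPn/negP => b_neq0.
    have := q_ge0 (- (a + 1) / (2 * b)).
    have -> : a + 2 * (- (a + 1) / (2 * b)) * b + (- (a + 1) / (2 * b)) ^+ 2 * c = -1.
      by rewrite -c0; field.
    by rewrite ler0N1.
  by rewrite b0 -c0 expr0n mulr0.
have := q_ge0 (- b / c); rewrite -(pmulr_rge0 _ c_gt0) -[b ^+ 2 <= _]subr_ge0.
have -> // : c * (a + 2 * (- b / c) * b + (- b / c) ^+ 2 * c) = a * c - b ^+ 2.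
by field; rewrite lt0r_neq0.
Qed.

Section SemidefiniteForm.
Variables (R : realFieldType) (V : lmodType R) (f : V -> V -> R).
Hypotheses (fDZl : forall t x y z, f (x + t *: y) z = f x z + t * f y z)
  (fC : forall x y, f x y = f y x) (f_ge0 : forall x, 0 <= f x x).

Lemma semidef_CauchySchwarz x y : f x y ^+ 2 <= f x x * f y y.
Proof.
apply: sqr_le_mul_of_quadratic_ge0 => // t.
have -> : f x x + 2 * t * f x y + t ^+ 2 * f y y = f (x + t *: y) (x + t *: y).
  by rewrite fDZl !(fC _ (x + _)) !fDZl (fC y x); ring.
exact: f_ge0.
Qed.

End SemidefiniteForm.

Definition frob (R : comRingType) m n (P Q : 'M[R]_(m, n)) : R := \tr (P^T *m Q).

Section MatrixAlgebra.
Variable R : comRingType.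

Lemma frobE m n (P Q : 'M[R]_(m, n)) : frob P Q = \sum_i \sum_j P i j * Q i j.
Proof.
rewrite /frob /mxtrace exchange_big; apply: eq_bigr => j _.
by rewrite mxE; apply: eq_bigr => i _; rewrite mxE.
Qed.

Lemma frobDZl m n t (P Q S : 'M[R]_(m, n)) :
  frob (P + t *: Q) S = frob P S + t * frob Q S.
Proof. by rewrite /frob linearD linearZ /= mulmxDl -scalemxAl mxtraceD mxtraceZ. Qed.

Lemma frobC m n (P Q : 'M[R]_(m, n)) : frob P Q = frob Q P.
Proof. by rewrite /frob -[LHS]mxtrace_tr trmx_mul trmxK. Qed.

Lemma frobDZr m n t (P Q S : 'M[R]_(m, n)) :
  frob S (P + t *: Q) = frob S P + t * frob S Q.
Proof. by rewrite frobC frobDZl !(frobC S). Qed.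

Lemma frobZl m n t (P Q : 'M[R]_(m, n)) : frob (t *: P) Q = t * frob P Q.
Proof. by rewrite /frob linearZ /= -scalemxAl mxtraceZ. Qed.

Lemma frobBr m n (P Q S : 'M[R]_(m, n)) : frob S (P - Q) = frob S P - frob S Q.
Proof. by rewrite -scaleN1r frobDZr mulN1r. Qed.

Lemma frob_mulmxl m n k (X : 'M[R]_(k, m)) (P : 'M[R]_(m, n)) Q :
  frob (X *m P) Q = frob P (X^T *m Q).
Proof. by rewrite /frob trmx_mul mulmxA. Qed.

Lemma col_mulmx m n k (A : 'M[R]_(m, n)) (B : 'M[R]_(n, k)) j :
  col j (A *m B) = A *m col j B.
Proof. by rewrite !colE mulmxA. Qed.

Lemma frob_sum_col m n (P Q : 'M[R]_(m, n)) :
  frob P Q = \sum_j frob (col j P) (col j Q).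
Proof.
rewrite frobE exchange_big; apply: eq_bigr => j _; rewrite frobE.
by apply: eq_bigr => i _; rewrite big_ord1 !mxE.
Qed.

Lemma frob_cV n (u v : 'cV[R]_n) : frob u v = (u^T *m v) 0 0.
Proof. exact: trace_mx11. Qed.

Lemma frob_delta n (A : 'M[R]_n) i j :
  frob (delta_mx i 0 : 'cV_n) (A *m delta_mx j 0) = A i j.
Proof. by rewrite frob_cV trmx_delta mulmxA -rowE -colE !mxE. Qed.

Lemma mxtrace_mulmx_trmx n (M P Q : 'M[R]_n) : \tr (M *m (P *m Q^T)) = frob Q (M *m P).
Proof. by rewrite /frob mulmxA mxtrace_mulC. Qed.

Lemma frob_add_scalar n k (B : 'M[R]_n) e (P : 'M[R]_(n, k)) :
  frob P ((B + e%:M) *m P) = frob P (B *m P) + e * frob P P.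
Proof. by rewrite mulmxDl mul_scalar_mx frobDZr. Qed.

Lemma frob_outer n (u v : 'cV[R]_n) : frob u (v *m v^T *m u) = frob v u ^+ 2.
Proof. by rewrite -mulmxA frobC frob_mulmxl frobE !big_ord1 -frob_cV expr2. Qed.

Lemma frob_diag_mull n (d : 'rV[R]_n) (W : 'M[R]_n) :
  frob (diag_mx d *m W) (diag_mx d *m W) = \sum_i d 0 i ^+ 2 * (W *m W^T) i i.
Proof.
rewrite /frob mxtrace_mulC trmx_mul tr_diag_mx -!mulmxA (mulmxA W) /mxtrace.
by apply: eq_bigr => i _; rewrite mul_diag_mx mxE mul_mx_diag mxE; ring.
Qed.

Lemma mulmx_trmx_add_col n (W : 'M[R]_n) (v : 'cV[R]_n) p : col p W = 0 ->
  (W + v *m delta_mx 0 p) *m (W + v *m delta_mx 0 p)^T = W *m W^T + v *m v^T.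
Proof.
rewrite colE => Wp0.
rewrite linearD /= trmx_mul trmx_delta mulmxDl !mulmxDr mulmxA Wp0 mul0mx addr0.
have -> : v *m delta_mx 0 p *m W^T = 0.
  by rewrite -mulmxA -trmx_delta -trmx_mul Wp0 trmx0 mulmx0.
rewrite add0r -(mulmxA v) (mulmxA (delta_mx 0 p)) mul_delta_mx.
suff -> : delta_mx 0 0 = 1%:M :> 'M[R]_1 by rewrite mul1mx.
by apply/matrixP => i j; rewrite !ord1 !mxE.
Qed.

Lemma gram_sub_conj n (W C : 'M[R]_n) : C^T = C ->
  W *m W^T - C *m (W *m W^T) *m C
    = ((1%:M - C) *m W) *m W^T + (C *m W) *m ((1%:M - C) *m W)^T.
Proof.
move=> sC; rewrite trmx_mul linearB /= trmx1 sC !mulmxBl !mulmxBr mul1mx mulmx1.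
by rewrite !mulmxA addrA subrK.
Qed.

End MatrixAlgebra.

Section FrobeniusOrder.
Variable R : realFieldType.

Lemma frob_ge0 m n (P : 'M[R]_(m, n)) : 0 <= frob P P.
Proof. by rewrite frobE; do 2!apply: sumr_ge0 => ? _; rewrite -expr2 sqr_ge0. Qed.

Lemma frob_eq0 m n (P : 'M[R]_(m, n)) : (frob P P == 0) = (P == 0).
Proof.
apply/idP/idP => [|/eqP->]; last by rewrite /frob mulmx0 mxtrace0.
have sq_ge0 (x : R) : 0 <= x * x by rewrite -expr2 sqr_ge0.
rewrite frobE => /eqP sum0; apply/eqP/matrixP => i j.
have row_ge0 k : true -> 0 <= \sum_l P k l * P k l.
  by move=> _; apply: sumr_ge0 => l _; apply: sq_ge0.
have row0 := psumr_eq0P row_ge0 sum0 (i := i) isT.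
have /eqP := psumr_eq0P (fun j _ => sq_ge0 (P i j)) row0 (i := j) isT.
by rewrite mulf_eq0 orbb mxE => /eqP.
Qed.

Lemma frob_CauchySchwarz m n (P Q : 'M[R]_(m, n)) :
  frob P Q ^+ 2 <= frob P P * frob Q Q.
Proof.
exact: semidef_CauchySchwarz (@frobDZl _ m n) (@frobC _ m n) (@frob_ge0 m n) P Q.
Qed.

End FrobeniusOrder.

Section Semidefinite.
Variable R : realType.

Lemma psdP n (A : 'M[R]_n) :
  A^T = A -> (forall v : 'cV_n, 0 <= frob v (A *m v)) -> psd A.
Proof. by move=> sA A_ge0; split=> // v; rewrite -mulmxA -frob_cV. Qed.

Lemma psd_frob_ge0 n k (A : 'M[R]_n) (P : 'M[R]_(n, k)) : psd A -> 0 <= frob P (A *m P).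
Proof.
case=> _ A_ge0; rewrite frob_sum_col; apply: sumr_ge0 => j _.
by rewrite col_mulmx frob_cV mulmxA.
Qed.

Lemma psd_diag_ge0 n (A : 'M[R]_n) i : psd A -> 0 <= A i i.
Proof. by move/(psd_frob_ge0 (delta_mx i 0 : 'cV_n)); rewrite frob_delta. Qed.

Lemma psd_CauchySchwarz n k (A : 'M[R]_n) (P Q : 'M[R]_(n, k)) : psd A ->
  frob P (A *m Q) ^+ 2 <= frob P (A *m P) * frob Q (A *m Q).
Proof.
move=> psdA; apply: (semidef_CauchySchwarz (f := fun P Q => frob P (A *m Q))).
- by move=> t X Y Z; rewrite frobDZl.
- by move=> X Y; rewrite frobC frob_mulmxl psdA.1.
- by move=> X; apply: psd_frob_ge0.
Qed.

Lemma psd_row_eq0 n (A : 'M[R]_n) p : psd A -> A p p = 0 -> row p A = 0.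
Proof.
move=> psdA App0; apply/rowP => j; rewrite !mxE.
have := psd_CauchySchwarz (delta_mx p 0 : 'cV_n) (delta_mx j 0) psdA.
rewrite !frob_delta App0 mul0r => sqr_le0.
by apply/eqP; rewrite -sqrf_eq0 eq_le sqr_le0 sqr_ge0.
Qed.

(* One step of symmetric Gaussian elimination: A - v v^T clears row and column p. *)
Definition pivot_col n (A : 'M[R]_n) p : 'cV[R]_n := (Num.sqrt (A p p))^-1 *: col p A.

Lemma psd_sub_pivot n (A : 'M[R]_n) p : psd A -> 0 < A p p ->
  psd (A - pivot_col A p *m (pivot_col A p)^T).
Proof.
move=> psdA App_gt0; apply: psdP => [|u].
  by rewrite linearB /= trmx_mul trmxK psdA.1.
have := psd_CauchySchwarz u (delta_mx p 0) psdA; rewrite frob_delta => cs.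
rewrite mulmxBl frobBr frob_outer frobZl colE (frobC _ u) exprMn exprVn.
rewrite sqr_sqrtr; last exact: ltW.
by rewrite subr_ge0 mulrC ler_pdivrMr.
Qed.

Lemma row_sub_pivot_pivot n (A : 'M[R]_n) p : A^T = A -> 0 < A p p ->
  row p (A - pivot_col A p *m (pivot_col A p)^T) = 0.
Proof.
move=> sA App_gt0; apply/rowP => j; rewrite !mxE big_ord1 !mxE.
have -> : A j p = A p j by rewrite -[in LHS]sA mxE.
have sqrtE : Num.sqrt (A p p) ^+ 2 = A p p by rewrite sqr_sqrtr ?ltW.
set s := Num.sqrt (A p p) in sqrtE *; rewrite -sqrtE.
have s_neq0 : s != 0 by rewrite sqrtr_eq0 -ltNge.
by field.
Qed.

Lemma row_sub_pivot n (A : 'M[R]_n) p i : row i A = 0 ->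
  row i (A - pivot_col A p *m (pivot_col A p)^T) = 0.
Proof.
move/rowP => Ai0; apply/rowP => j; have := Ai0 p; have := Ai0 j.
by rewrite !mxE big_ord1 !mxE => -> ->; rewrite mulr0 mul0r subr0.
Qed.

Lemma psd_factor_rows n m : (m <= n)%N -> forall A : 'M[R]_n, psd A ->
  (forall i : 'I_n, (m <= i)%N -> row i A = 0) ->
  exists W : 'M[R]_n, A = W *m W^T /\ forall j : 'I_n, (m <= j)%N -> col j W = 0.
Proof.
elim: m => [|m IH] le_mn A psdA rowA.
  exists 0; split=> [|j _]; last by apply/colP => i; rewrite !mxE.
  by apply/row_matrixP => i; rewrite rowA // mul0mx row0.
pose p := Ordinal le_mn.
have rows_ge_m (B : 'M[R]_n) : row p B = 0 ->
    (forall i : 'I_n, (m < i)%N -> row i B = 0) ->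
    forall i : 'I_n, (m <= i)%N -> row i B = 0.
  move=> Bp0 Bi0 i; rewrite leq_eqVlt => /orP[/eqP mi | /Bi0//].
  by have -> : i = p by apply: val_inj.
have [App0 | App_neq0] := eqVneq (A p p) 0.
  have := rows_ge_m A (psd_row_eq0 psdA App0) rowA.
  move=> /(IH (ltnW le_mn) A psdA)[W [AW colW]].
  by exists W; split=> // j /ltnW/colW.
have App_gt0 : 0 < A p p by rewrite lt0r App_neq0 psd_diag_ge0.
set v := pivot_col A p.
have := rows_ge_m _ (row_sub_pivot_pivot psdA.1 App_gt0)
  (fun i lt_mi => row_sub_pivot p (rowA i lt_mi)).
move=> /(IH (ltnW le_mn) _ (psd_sub_pivot psdA App_gt0))[W [AW colW]].
exists (W + v *m delta_mx 0 p); split.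
  by rewrite mulmx_trmx_add_col ?colW // -AW subrK.
move=> j lt_mj; have jp : (j == p) = false.
  by apply/negbTE; apply: contraTneq lt_mj => ->; rewrite ltnn.
apply/colP => i; have /colP/(_ i) := colW j (ltnW lt_mj).
by rewrite !mxE big_ord1 !mxE jp andbF mulr0 addr0.
Qed.

Lemma psd_factor n (A : 'M[R]_n) : psd A -> exists W : 'M[R]_n, A = W *m W^T.
Proof.
move=> psdA; have [|W [AW _]] := psd_factor_rows (leqnn n) psdA.
  by move=> i; rewrite leqNgt ltn_ord.
by exists W.
Qed.

End Semidefinite.

Section TraceNorm.
Variable R : realType.

Definition contraction n (M : 'M[R]_n) :=
  forall v : 'cV[R]_n, frob (M *m v) (M *m v) <= frob v v.

Lemma contraction_frob n k (M : 'M[R]_n) (Q : 'M[R]_(n, k)) :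
  contraction M -> frob (M *m Q) (M *m Q) <= frob Q Q.
Proof.
by move=> contrM; rewrite !frob_sum_col; apply: ler_sum => j _; rewrite col_mulmx.
Qed.

Lemma contraction_CauchySchwarz n k (M : 'M[R]_n) (P Q : 'M[R]_(n, k)) :
  contraction M -> frob P (M *m Q) ^+ 2 <= frob P P * frob Q Q.
Proof.
move=> contrM; apply: le_trans (frob_CauchySchwarz _ _) _.
by rewrite ler_wpM2l ?frob_ge0 ?contraction_frob.
Qed.

Lemma psd_add_scalar n (B : 'M[R]_n) e : psd B -> 0 <= e -> psd (B + e%:M).
Proof.
move=> psdB e_ge0; apply: psdP => [|v]; first by rewrite linearD /= psdB.1 tr_scalar_mx.
by rewrite frob_add_scalar addr_ge0 ?mulr_ge0 ?frob_ge0 ?psd_frob_ge0.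
Qed.

Lemma psd_add_scalar_unitmx n (B : 'M[R]_n) e : psd B -> 0 < e -> B + e%:M \in unitmx.
Proof.
move=> psdB e_gt0; rewrite -row_free_unit; apply: inj_row_free => r rBe0.
have Be_r0 : (B + e%:M) *m r^T = 0.
  by rewrite -(psd_add_scalar psdB (ltW e_gt0)).1 -trmx_mul rBe0 trmx0.
have /eqP : frob r^T (B *m r^T) + e * frob r^T r^T = 0.
  by rewrite -frob_add_scalar Be_r0 /frob mulmx0 mxtrace0.
rewrite paddr_eq0 ?psd_frob_ge0 ?(mulr_ge0 (ltW e_gt0) (frob_ge0 _)) //.
move=> /andP[_]; rewrite mulf_eq0 gt_eqF //= frob_eq0 => /eqP/(congr1 trmx).
by rewrite trmxK trmx0.
Qed.

Lemma contraction_abs_mx_inv n (A B : 'M[R]_n) e : is_abs_mx A B -> 0 < e ->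
  contraction (A *m invmx (B + e%:M)).
Proof.
(* With u = (B + e)^-1 v: |A u| = |B u| <= |(B + e) u| = |v|, as B is psd. *)
move=> [psdB BB] e_gt0 v; set u := invmx (B + e%:M) *m v.
have vE : v = (B + e%:M) *m u.
  by rewrite /u mulmxA mulmxV ?mul1mx ?psd_add_scalar_unitmx.
have AuE : frob (A *m u) (A *m u) = frob (B *m u) (B *m u).
  by rewrite [LHS]frob_mulmxl [RHS]frob_mulmxl !mulmxA -BB psdB.1.
rewrite -mulmxA -/u AuE.
rewrite {1 2}vE mulmxDl mul_scalar_mx frobDZl !frobDZr (frobC (B *m u) u).
have := psd_frob_ge0 u psdB; have := frob_ge0 u; have := ltW e_gt0; nra.
Qed.

Lemma mxtrace_abs_le n (A B : 'M[R]_n) e : is_abs_mx A B -> 0 < e ->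
  \tr B <= \tr (A *m invmx (B + e%:M) *m A^T) + e * n%:R.
Proof.
(* tr B = tr (A Bi A^T) + e tr (Bi B), and tr (Bi B) = n - e tr Bi <= n. *)
move=> [psdB BB] e_gt0; set Bi := invmx (B + e%:M).
have Be_unit := psd_add_scalar_unitmx psdB e_gt0.
have BiBe : Bi *m (B + e%:M) = 1%:M by rewrite mulVmx.
have trBE : \tr B = \tr (Bi *m (B *m B)) + e * \tr (Bi *m B).
  rewrite -{1}(mul1mx B) -BiBe -mulmxA mulmxDl mul_scalar_mx mulmxDr mxtraceD.
  by rewrite -scalemxAr mxtraceZ.
have trBBE : \tr (Bi *m (B *m B)) = \tr (A *m Bi *m A^T).
  by rewrite BB mulmxA mxtrace_mulC mulmxA.
have trBi_ge0 : 0 <= \tr Bi.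
  have := psd_frob_ge0 Bi (psd_add_scalar psdB (ltW e_gt0)).
  by rewrite mulmxV // /frob mulmx1 mxtrace_tr.
have trBiB : \tr (Bi *m B) <= n%:R.
  have -> : Bi *m B = 1%:M - e *: Bi by rewrite -BiBe mulmxDr mul_mx_scalar addrK.
  by rewrite linearB /= mxtrace1 mxtraceZ gerBl (mulr_ge0 (ltW e_gt0)).
by rewrite trBE trBBE lerD2l (ler_wpM2l (ltW e_gt0)).
Qed.

Lemma abs_mx_trace_le_sup n (A B : 'M[R]_n) c : is_abs_mx A B ->
  (forall M, contraction M -> \tr (M *m A^T) <= c) -> \tr B <= c.
Proof.
move=> absB trMA_le; apply/ler_addgt0Pr => e e_gt0.
have e'_gt0 : 0 < e / n.+1%:R by rewrite divr_gt0.
apply: le_trans (mxtrace_abs_le absB e'_gt0) _.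
apply: lerD; first exact/trMA_le/(contraction_abs_mx_inv absB e'_gt0).
by rewrite mulrAC ler_pdivrMr // (ler_wpM2l (ltW e_gt0)) // ler_nat.
Qed.

End TraceNorm.

Lemma sqr_subr_le_norm_subr_sqr (R : realDomainType) (s q : R) :
  0 <= s -> 0 <= q -> (s - q) ^+ 2 <= `|s ^+ 2 - q ^+ 2|.
Proof.
move=> s_ge0 q_ge0; case: (lerP q s) => qs; [rewrite ger0_norm | rewrite ler0_norm]; nra.
Qed.

Lemma sqr_subr_invsqrt_le (R : rcfType) (N d : R) : 0 < N -> 0 < d ->
  (1 - (Num.sqrt (N * d))^-1) ^+ 2 * d <= `|d - N^-1|.
Proof.
move=> N_gt0 d_gt0; rewrite sqrtrM; last exact: ltW.
have r_gt0 : 0 < Num.sqrt N by rewrite sqrtr_gt0.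
have s_gt0 : 0 < Num.sqrt d by rewrite sqrtr_gt0.
have rr : Num.sqrt N ^+ 2 = N by rewrite sqr_sqrtr ?ltW.
have ss : Num.sqrt d ^+ 2 = d by rewrite sqr_sqrtr ?ltW.
set r := Num.sqrt N in r_gt0 rr *; set s := Num.sqrt d in s_gt0 ss *.
have -> : (1 - (r * s)^-1) ^+ 2 * d = (s - r^-1) ^+ 2.
  by rewrite -ss; field; rewrite !lt0r_neq0.
rewrite -ss -rr -exprVn; apply: sqr_subr_le_norm_subr_sqr; rewrite ?invr_ge0 ltW //.
Qed.

Definition diag_normalizer (R : rcfType) n (rho : 'M[R]_n) : 'rV[R]_n :=
  \row_i (Num.sqrt (n%:R * rho i i))^-1.

Lemma sigma_of_diag_normalizer (R : realType) n (rho : 'M[R]_n) :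
  (forall i, 0 < rho i i) ->
  sigma_of rho = diag_mx (diag_normalizer rho) *m rho *m diag_mx (diag_normalizer rho).
Proof.
move=> diag_gt0; apply/matrixP => i j.
have n_gt0 : 0 < n%:R :> R by rewrite ltr0n (leq_ltn_trans (leq0n i) (ltn_ord i)).
rewrite mul_mx_diag mul_diag_mx !mxE !sqrtrM ?ler0n ?(ltW (diag_gt0 _)) //.
have nn : Num.sqrt n%:R ^+ 2 = n%:R :> R by rewrite sqr_sqrtr ?ler0n.
have [sn_gt0 si_gt0 sj_gt0] : [/\ 0 < Num.sqrt n%:R :> R,
    0 < Num.sqrt (rho i i) & 0 < Num.sqrt (rho j j)] by split; rewrite sqrtr_gt0.
set sn := Num.sqrt n%:R in nn sn_gt0 *; rewrite -nn.
by field; rewrite !lt0r_neq0.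
Qed.

Theorem lemma6 :
  exists K : nat, forall (R : realType) (n : nat) (xi : R) (rho : 'M[R]_n),
    0 <= xi -> xi <= 1 / 2 ->
    psd rho -> \tr rho = 1 ->
    (forall i, 0 < rho i i) ->
    \sum_i `|rho i i - 1 / n%:R| <= xi ^+ 3 ->
    forall B : 'M[R]_n, is_abs_mx (rho - sigma_of rho) B ->
    \tr B <= K%:R * xi.
Proof.
exists 2%N => R n xi rho xi_ge0 xi_le_half rho_psd tr_rho diag_gt0 dev_le B absB.
have n_gt0 : (0 < n)%N.
  rewrite lt0n; apply/eqP => n0; subst n.
  by move: tr_rho; rewrite /mxtrace big_ord0 => /eqP; rewrite eq_sym oner_eq0.
set c := diag_normalizer rho; set C := diag_mx c.
have [W rhoE] := psd_factor rho_psd.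
set F := (1%:M - C) *m W.
have diffE : rho - sigma_of rho = F *m W^T + (C *m W) *m F^T.
  by rewrite sigma_of_diag_normalizer // -/c -/C rhoE gram_sub_conj ?tr_diag_mx.
have WW : frob W W = 1 by rewrite /frob mxtrace_mulC -rhoE.
have CWCW : frob (C *m W) (C *m W) = 1.
  rewrite frob_diag_mull -rhoE (eq_bigr (fun _ => n%:R^-1)) => [|i _].
    by rewrite sumr_const card_ord -[LHS]mulr_natl mulfV // pnatr_eq0 -lt0n.
  rewrite mxE exprVn sqr_sqrtr ?mulr_ge0 ?ler0n ?ltW // invfM -mulrA mulVf ?mulr1 //.
  exact: lt0r_neq0.
have FF : frob F F <= xi ^+ 3.
  rewrite /F -diag_const_mx -raddfB frob_diag_mull -rhoE; apply: le_trans dev_le.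
  apply: ler_sum => i _; rewrite !mxE div1r.
  by apply: sqr_subr_invsqrt_le; rewrite ?ltr0n.
have xi3_le : xi ^+ 3 <= xi ^+ 2 by rewrite exprS ler_piMl ?sqr_ge0 //; lra.
have le_xi (T : R) : T ^+ 2 <= xi ^+ 3 -> T <= xi by move=> T_le; nra.
apply: (abs_mx_trace_le_sup absB) => M contrM.
rewrite diffE linearD /= [(F *m _)^T]trmx_mul [(_ *m F^T)^T]trmx_mul !trmxK.
rewrite mulmxDr mxtraceD !mxtrace_mulmx_trmx mulr_natl mulr2n.
apply: lerD; apply: le_xi.
- by apply: le_trans (contraction_CauchySchwarz F W contrM) _; rewrite WW mulr1.
- by apply: le_trans (contraction_CauchySchwarz _ F contrM) _; rewrite CWCW mul1r.
Qed.
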